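(* Let $A$ be a random real $N\times N$ matrix and $C$ a random vector in $\mathbb{R}^N$ whose $N^2+N$ entries are independent non-singular real random variables. Let $p_1,\dots,p_N\in\mathbb{C}[x]$ be linearly independent polynomials in one variable of degree at most $N-1$. Then $$\mathbb{P}\big(\det(p_1(A)C,\,p_2(A)C,\dots,p_N(A)C)=0\big)=0,$$ i.e. the vectors $p_1(A)C,\dots,p_N(A)C$ are linearly independent almost surely.
   Context: A real random variable $X$ is non-singular if $\mathbb{P}(X=a)=0$ for every $a\in\mathbb{R}$. *)

From HB Require Import structures.
From mathcomp Require Import all_boot all_order all_algebra.
From mathcomp Require Import all_classical all_reals all_analysis.
From mathcomp Require Import complex.
Set Implicit Arguments. Unset Strict Implicit. Unset Printing Implicit Defensive.
Import Order.TTheory GRing.Theory Num.Theory.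
Local Open Scope classical_set_scope.
Local Open Scope ring_scope.

Definition mutually_independent d (T : measurableType d) (R : realType)
  (P : probability T R) (I : finType) (X : I -> {RV P >-> R}) : Prop :=
  forall (J : {set I}) (B : I -> set R),
    (forall i, measurable (B i)) ->
    P (\bigcap_(i in [set i | i \in J]) (X i @^-1` B i)) =
    (\prod_(i in J) P (X i @^-1` B i))%E.

Definition non_singular d (T : measurableType d) (R : realType)
  (P : probability T R) (X : {RV P >-> R}) : Prop :=
  forall a : R, P (X @^-1` [set a]) = 0%E.

Definition poly_mx_vec (K : nzRingType) (n : nat) (p : {poly K})
  (A : 'M[K]_n) (c : 'cV[K]_n) : 'cV[K]_n :=
  \sum_(k < size p) p`_k *: iter k (mulmx A) c.

Definition poly_lin_indep (K : nzRingType) (n : nat) (p : 'I_n -> {poly K}) : Prop :=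
  forall c : 'I_n -> K, \sum_(i < n) c i *: p i = 0 -> forall i, c i = 0.

From HB Require Import structures.
From mathcomp Require Import all_boot all_order all_algebra perm.
From mathcomp Require Import all_classical all_reals all_analysis.
From mathcomp Require Import complex zify.
Import Order.TTheory GRing.Theory Num.Theory.
Local Open Scope classical_set_scope.
Local Open Scope ring_scope.
Set Implicit Arguments. Unset Strict Implicit. Unset Printing Implicit Defensive.

(* The matrix with columns p_k(A) C is
   the Krylov matrix K(A, C) = [C, A C, ..., A^(N-1) C] times the coefficient
   matrix of the p_k, which is invertible because the p_k are linearly
   independent of degree < N.  So the event is {det K(A, C) = 0}, and det K(A, C)
   is a polynomial in the N^2 + N real entries of (A, C), not identically zero
   (it equals 1 for the shift matrix and the first basis vector).

   The probabilistic core is: a nonzero polynomial evaluated at independent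
   non-singular random variables is almost surely nonzero.  It is proved by
   induction on the variables, expanding in one variable X i: its coefficients
   are polynomials in the other variables, hence measurable for the
   sigma-algebra they generate, which is independent of X i.  By Fubini, once
   the other variables are fixed with a chosen coefficient nonzero, the
   expression is a nonzero polynomial in X i, whose finitely many roots X i
   hits with probability zero; the case of a vanishing coefficient is the
   induction hypothesis. *)

Section PolynomialFunctions.
Variables (R : realType) (I : finType).

(* [polyfun s f]: the function f of a family of real variables x : I -> R is a
   polynomial in the coordinates x j, j in s.  This recursive form is the
   one used in the Fubini induction of the probabilistic part. *)
Fixpoint polyfun (s : seq I) (f : (I -> R) -> R) : Prop :=
  if s is i :: s' then
    exists (m : nat) (g : nat -> (I -> R) -> R), (forall k, polyfun s' (g k)) /\
      forall x, f x = \sum_(k < m) g k x * x i ^+ k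
  else exists c, forall x, f x = c.

Lemma polyfun_ext s f g : polyfun s f -> f =1 g -> polyfun s g.
Proof.
case: s => [|i s] /=; first by move=> [a Ea] E; exists a => x; rewrite -E.
by move=> [m [h [Ph Ef]]] E; exists m, h; split => // x; rewrite -E.
Qed.

Lemma polyfun_cst s c : polyfun s (fun _ => c).
Proof.
elim: s c => [|i s IH] c /=; first by exists c.
exists 1%N, (fun _ _ => c); split => // x.
by rewrite big_ord1 expr0 mulr1.
Qed.

Lemma polyfun_cons i s f n (g : nat -> (I -> R) -> R) :
  (forall k, polyfun s (g k)) -> (forall x, f x = (\poly_(k < n) g k x).[x i]) ->
  polyfun (i :: s) f.
Proof. by move=> Pg Ef; exists n, g; split => // x; rewrite Ef horner_poly. Qed.

(* Elimination rule in Horner form, with coefficients vanishing beyond the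
   length of the representation, so that they are the true coefficients of
   the polynomial in the head variable. *)
Lemma polyfun_consE i s f : polyfun (i :: s) f ->
  exists m (g : nat -> (I -> R) -> R), [/\ forall k, polyfun s (g k),
    forall x k, (m <= k)%N -> g k x = 0 &
    forall x, f x = (\poly_(k < m) g k x).[x i]].
Proof.
move=> [m [g [Pg Ef]]].
exists m, (fun k x => if (k < m)%N then g k x else 0); split.
- by move=> k; case: (k < m)%N; [exact: Pg | exact: polyfun_cst].
- by move=> x k; rewrite leqNgt => /negbTE ->.
- by move=> x; rewrite Ef horner_poly; apply: eq_bigr => k _; rewrite ltn_ord.
Qed.

Lemma coef_poly_vanishing (m : nat) (c : nat -> R) k :
  (forall k, (m <= k)%N -> c k = 0) -> (\poly_(k < m) c k)`_k = c k.
Proof. by move=> c0; rewrite coef_poly; case: ltnP => // /c0 ->. Qed.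

Lemma polyfun_add s f g : polyfun s f -> polyfun s g -> polyfun s (fun x => f x + g x).
Proof.
elim: s f g => [|i s IH] f g.
  by move=> [a Ea] [b Eb]; exists (a + b) => x; rewrite Ea Eb.
move=> /polyfun_consE [m [a [Pa a0 Ef]]] /polyfun_consE [n [b [Pb b0 Eg]]].
apply: (@polyfun_cons _ _ _ (m + n) (fun k x => a k x + b k x)) => [k|x].
  exact: IH.
rewrite Ef Eg -hornerD; congr (_.[_]); apply/polyP => k.
rewrite coefD !coef_poly_vanishing // => j; [move=> mnj | exact: b0 | exact: a0].
by rewrite a0 ?b0 ?addr0 // (leq_trans _ mnj) ?leq_addl ?leq_addr.
Qed.

Lemma polyfun_sum s (J : Type) (r : seq J) (Pr : pred J) (F : J -> (I -> R) -> R) :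
  (forall t, polyfun s (F t)) -> polyfun s (fun x => \sum_(t <- r | Pr t) F t x).
Proof.
move=> PF; elim: r => [|t r IH].
  by apply: (polyfun_ext (polyfun_cst s 0)) => x; rewrite big_nil.
apply: (polyfun_ext (f := fun x => (if Pr t then F t x else 0) + \sum_(t <- r | Pr t) F t x)).
  by apply: polyfun_add => //; case: (Pr t); [exact: PF | exact: polyfun_cst].
by move=> x; rewrite big_cons; case: (Pr t); rewrite ?add0r.
Qed.

Lemma polyfun_mul s f g : polyfun s f -> polyfun s g -> polyfun s (fun x => f x * g x).
Proof.
elim: s f g => [|i s IH] f g.
  by move=> [a Ea] [b Eb]; exists (a * b) => x; rewrite Ea Eb.
move=> /polyfun_consE [m [a [Pa a0 Ef]]] /polyfun_consE [n [b [Pb b0 Eg]]].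
pose conv k x := \sum_(j < k.+1) a j x * b (k - j)%N x.
apply: (@polyfun_cons _ _ _ (m + n) conv) => [k|x].
  by apply: polyfun_sum => j; apply: IH.
rewrite Ef Eg -hornerM; congr (_.[_]); apply/polyP => k.
rewrite coefM coef_poly_vanishing => [|{}k mnk].
  by apply: eq_bigr => j _; rewrite !coef_poly_vanishing // => l; [exact: b0 | exact: a0].
apply: big1 => j _; have [jm|mj] := ltnP j m; last by rewrite a0 ?mul0r.
by rewrite b0 ?mulr0 //; move: (ltn_ord j); lia.
Qed.

Lemma polyfun_prod s (J : Type) (r : seq J) (Pr : pred J) (F : J -> (I -> R) -> R) :
  (forall t, polyfun s (F t)) -> polyfun s (fun x => \prod_(t <- r | Pr t) F t x).
Proof.
move=> PF; elim: r => [|t r IH].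
  by apply: (polyfun_ext (polyfun_cst s 1)) => x; rewrite big_nil.
apply: (polyfun_ext (f := fun x => (if Pr t then F t x else 1) * \prod_(t <- r | Pr t) F t x)).
  by apply: polyfun_mul => //; case: (Pr t); [exact: PF | exact: polyfun_cst].
by move=> x; rewrite big_cons; case: (Pr t); rewrite ?mul1r.
Qed.

Lemma polyfun_var s j : j \in s -> polyfun s (fun x => x j).
Proof.
elim: s => [//|i s IH]; rewrite in_cons => /orP [/eqP ->|js].
  apply: (@polyfun_cons _ _ _ 2 (fun k _ => (k == 1%N)%:R)) => [k|x].
    exact: polyfun_cst.
  by rewrite horner_poly !big_ord_recr big_ord0 /= add0r mul0r add0r mul1r expr1.
apply: (@polyfun_cons _ _ _ 1 (fun _ x => x j)) => [_|x]; first exact: IH.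
by rewrite horner_poly big_ord1 expr0 mulr1.
Qed.

Lemma polyfun_local s f : polyfun s f ->
  forall x y, {in s, forall j, x j = y j} -> f x = f y.
Proof.
elim: s f => [|i s IH] f /=; first by move=> [c Ec] x y _; rewrite !Ec.
move=> [m [g [Pg Ef]]] x y Exy; rewrite !Ef Exy ?mem_head //.
apply: eq_bigr => k _; congr (_ * _); apply: (IH _ (Pg k)) => j js.
by apply: Exy; rewrite in_cons js orbT.
Qed.

Lemma measurable_polyfun d (T : measurableType d) (Y : I -> T -> R) s f :
  polyfun s f -> {in s, forall j, measurable_fun setT (Y j)} ->
  measurable_fun setT (fun w => f (fun j => Y j w)).
Proof.
elim: s f => [|i s IH] f /=.
  move=> [c Ec] _; apply: (eq_measurable_fun (cst c)) => [w _|].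
    by rewrite Ec.
  exact: measurable_cst.
move=> [m [g [Pg Ef]]] mY.
apply: (eq_measurable_fun (fun w => \sum_(k < m) g k (fun j => Y j w) * Y i w ^+ k)).
  by move=> w _; rewrite Ef.
apply: measurable_sum => k; apply: measurable_realfun.measurable_funM.
  by apply: IH => // j js; apply: mY; rewrite in_cons js orbT.
by apply: measurable_realfun.measurable_funX; apply: mY; rewrite mem_head.
Qed.

End PolynomialFunctions.

Lemma measurable_preimage d d' (T1 : measurableType d) (T2 : measurableType d')
  (f : T1 -> T2) B :
  measurable_fun setT f -> measurable B -> measurable (f @^-1` B).
Proof. by move=> mf mB; rewrite -[X in measurable X]setTI; exact: mf. Qed.

Section RootSets.
Variables (R : realType) (d : measure_display) (T : measurableType d)
  (P : probability T R).

Lemma measurable_root_set (Q : {poly R}) : measurable [set z : R | Q.[z] = 0].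
Proof.
have mQ := measurable_realfun.continuous_measurable_fun (@continuous_horner _ Q).
exact: (measurable_preimage mQ (measurable_set1 0)).
Qed.

(* A non-singular random variable is almost surely not a root of a given
   nonzero polynomial: the root set is finite and each root has mass zero. *)
Lemma non_singular_root_set (Z : {RV P >-> R}) (Q : {poly R}) :
  non_singular Z -> Q != 0 -> distribution P Z [set z | Q.[z] = 0] = 0%E.
Proof.
move=> nsZ; have [n] := ubnP (size Q); elim: n Q => // n IH Q szQ Q0.
apply/negligibleP; first exact: measurable_root_set.
have [[a /factor_theorem [Q' EQ]]|noroot] := pselect (exists a, root Q a); last first.
  apply: (negligibleS _ (negligible_set0 _)) => z /= Qz.
  by apply: noroot; exists z; exact/rootP.
have Q'0 : Q' != 0 by apply: contraNneq Q0 => Q'0; rewrite EQ Q'0 mul0r.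
have szQ' : (size Q' < n)%N.
  by move: szQ; rewrite EQ size_mul ?polyXsubC_eq0 // size_XsubC addn2.
apply: (@negligibleS _ _ _ _ ([set a] `|` [set z | Q'.[z] = 0])).
  move=> z /=; rewrite EQ hornerM hornerXsubC => /eqP; rewrite mulf_eq0 subr_eq0.
  by case/orP => /eqP; [right | left].
apply: negligibleU.
  by apply/negligibleP; [exact: measurable_set1 | exact: nsZ].
by apply/negligibleP; [exact: measurable_root_set | exact: IH].
Qed.

End RootSets.

Section IndependentCoordinate.
Variables (R : realType) (I : finType) (d : measure_display) (T : measurableType d)
  (P : probability T R) (X : I -> {RV P >-> R}).
Hypothesis indep : mutually_independent X.
Variables (i : I) (s : seq I).
Hypothesis i_notin_s : i \notin s.

Let J : {set I} := [set j | j \in s].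

Let i_notin_J : i \notin J. Proof. by rewrite inE. Qed.

(* The cylinder events of the family (X j)_{j in s}: intersections of events
   {X j \in B j}.  They form a pi-system generating the sigma-algebra of the
   family. *)
Definition cylinder : set (set T) :=
  [set E | exists B : I -> set R, (forall j, measurable (B j)) /\
     E = \bigcap_(j in [set j | j \in J]) X j @^-1` B j].

Lemma cylinder_measurable : cylinder `<=` measurable.
Proof.
move=> _ [B [mB ->]]; apply: fin_bigcap_measurable; first exact: finite_finset.
by move=> j _; apply: measurable_funPTI.
Qed.

Let cylinder_setI : setI_closed cylinder.
Proof.
move=> _ _ [B [mB ->]] [C [mC ->]]; exists (fun j => B j `&` C j); split.
  by move=> j; apply: measurableI.
apply/seteqP; split => w /=; first by move=> [Bw Cw] j Jj; split; [exact: Bw | exact: Cw].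
by move=> BCw; split => j /BCw [].
Qed.

Let cylinder_setT : cylinder setT.
Proof. by exists (fun _ => setT); split => //; apply/seteqP; split. Qed.

(* Independence of X i from the cylinder events, read off the product rule
   for the subfamily i :: s. *)
Let indep_cylinder B0 E : measurable B0 -> cylinder E ->
  P (X i @^-1` B0 `&` E) = (P (X i @^-1` B0) * P E)%E.
Proof.
move=> mB0 [B [mB ->]].
pose B' j := if j == i then B0 else B j.
have mB' j : measurable (B' j) by rewrite /B'; case: ifP.
have B'E j : j \in J -> B' j = B j.
  by move=> Jj; rewrite /B' ifN //; apply: contraNneq i_notin_J => <-.
have -> : X i @^-1` B0 `&` \bigcap_(j in [set j | j \in J]) X j @^-1` B j =
     \bigcap_(j in [set j | j \in i |: J]) X j @^-1` B' j.
  apply/seteqP; split => w /=.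
    move=> [B0w Bw] j; rewrite /mkset in_setU1 => /orP [/eqP ->|Jj].
      by rewrite /B' eqxx.
    by rewrite B'E //; apply: Bw.
  move=> B'w; split; first by have := B'w i; rewrite /mkset setU11 /B' eqxx; apply.
  by move=> j Jj; rewrite -B'E //; apply: B'w; rewrite /mkset in_setU1 Jj orbT.
have B'i : B' i = B0 by rewrite /B' eqxx.
rewrite indep // big_setU1 //= B'i indep //; congr (_ * _)%E.
by apply: eq_bigr => j /B'E ->.
Qed.

Definition Tcyl := g_sigma_algebraType cylinder.

Lemma sigma_cylinder_measurable : <<s cylinder >> `<=` measurable.
Proof.
exact: smallest_sub (sigma_algebra_measurable T) cylinder_measurable.
Qed.

Lemma indep_sigma_cylinder B0 (E : set Tcyl) : measurable B0 -> <<s cylinder >> E ->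
  P (X i @^-1` B0 `&` E) = (P (X i @^-1` B0) * P E)%E.
Proof.
move=> mB0; have mA : measurable (X i @^-1` B0) := measurable_funPTI (X i) mB0.
have finA : P (X i @^-1` B0) \is a fin_num := fin_num_measure P _ mA.
move: E; apply: (@dynkin_induction _ Tcyl cylinder
  (fun E => P (X i @^-1` B0 `&` E) = (P (X i @^-1` B0) * P E)%E)) => //.
- by rewrite setIT probability_setT mule1.
- by move=> E; apply: indep_cylinder.
- move=> S mS HS; have mST : measurable (S : set T) := sigma_cylinder_measurable mS.
  rewrite -setDE (measureD mA mST) ?HS ?probability_setC //; last first.
    by rewrite ltey_eq finA.
  by rewrite muleBr ?mule1 //; congr (_ - _)%E; exact: HS.
- move=> F mF tF HF.
  have mFT n : measurable (F n : set T) := sigma_cylinder_measurable (mF n).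
  have mAF n : [set: nat] n -> measurable (X i @^-1` B0 `&` F n).
    by move=> _; apply: measurableI.
  rewrite setI_bigcupr (measure_bigcup P _ _ mAF); last exact: trivIset_setIl.
  rewrite measure_bigcup // (eq_eseriesr (fun n _ => HF n)).
  by rewrite -(fineK finA) nneseriesZl // => n _; apply: measure_ge0.
Qed.

(* The identity of the sample space, seen as a map into the coarser
   measurable space Tcyl; its law is the restriction of P to sigma(X j, j in s). *)
Definition forget (w : T) : Tcyl := w.

Lemma measurable_forget : measurable_fun setT forget.
Proof. by move=> _ A mA; rewrite setTI; exact: sigma_cylinder_measurable. Qed.

HB.instance Definition _ := isMeasurableFun.Build _ _ _ _ forget measurable_forget.

Definition pair_obs (w : T) : (R * Tcyl)%type := (X i w, forget w).

Lemma measurable_pair_obs : measurable_fun setT pair_obs.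
Proof. exact: measurable_fun_pair. Qed.

HB.instance Definition _ := isMeasurableFun.Build _ _ _ _ pair_obs measurable_pair_obs.

(* Independence as a statement about laws: the joint law of pair_obs is the
   product of the marginal laws; both measures agree on measurable rectangles,
   which form a pi-system generating the product sigma-algebra. *)
Lemma law_pair_obs (A : set (R * Tcyl)%type) : measurable A ->
  distribution P pair_obs A = (distribution P (X i) \x^ distribution P forget)%E A.
Proof.
move=> mA.
apply: (measure_unique [set A1 `*` A2 | A1 in measurable & A2 in measurable]
  (fun _ => setT)) => //.
- exact: measurable_prod_measurableType.
- move=> _ _ [A1 mA1 [A2 mA2 <-]] [B1 mB1 [B2 mB2 <-]]; rewrite -setXI.
  by exists (A1 `&` B1); [exact: measurableI | exists (A2 `&` B2) => //; exact: measurableI].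
- by move=> _; exists setT => //; exists setT => //; rewrite setXTT.
- by rewrite bigcup_const.
- move=> _ [A1 mA1 [A2 mA2 <-]].
  change (P (X i @^-1` A1 `&` A2) =
    (distribution P (X i) \x^ distribution P forget)%E (A1 `*` A2)).
  by rewrite product_measure2E //; exact: indep_sigma_cylinder.
- move=> _; change (P (pair_obs @^-1` setT) < +oo)%E.
  by rewrite preimage_setT probability_setT ltry.
Qed.

(* Fubini: if every section {z | (z, w) \in A} is null for the law of X i,
   then the event {pair_obs \in A} is null. *)
Lemma null_sections (A : set (R * Tcyl)%type) : measurable A ->
  (forall w : Tcyl, distribution P (X i) (ysection A w) = 0%E) ->
  P (pair_obs @^-1` A) = 0%E.
Proof.
move=> mA A0; rewrite -[LHS]/(distribution P pair_obs A) law_pair_obs //.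
by apply: integral0_eq => w _; exact: A0.
Qed.

Lemma measurable_coordinate j : j \in s ->
  measurable_fun (setT : set Tcyl) (fun w : Tcyl => X j w).
Proof.
move=> js _ B mB; rewrite setTI; apply: sub_sigma_algebra.
exists (fun l => if l == j then B else setT); split; first by move=> l; case: ifP.
apply/seteqP; split => w /=; first by move=> Bw l _; case: eqP => // ->.
by move=> Bw; have := Bw j; rewrite /mkset inE js eqxx; apply.
Qed.

Definition coords (zw : (R * Tcyl)%type) (j : I) : R :=
  if j == i then zw.1 else X j zw.2.

Lemma coords_pair_obs w : coords (pair_obs w) = fun j => X j w.
Proof. by apply/funext => j; rewrite /coords /=; case: eqP => // ->. Qed.

Lemma measurable_coords j : j \in i :: s -> measurable_fun setT (fun zw => coords zw j).
Proof.
rewrite in_cons /coords; case: eqP => [_ _|_ /= js]; first exact: measurable_fst.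
exact: measurableT_comp (measurable_coordinate js) measurable_snd.
Qed.

Lemma polyfun_coords f zw : polyfun s f -> f (coords zw) = f (fun j => X j zw.2).
Proof.
move=> Pf; apply: (polyfun_local Pf) => j js; rewrite /coords; case: eqP => // ji.
by move: i_notin_s; rewrite -ji js.
Qed.

Hypothesis ns_i : non_singular (X i).

(* For a fixed
   value w of (X j)_{j in s} the section of the bad event is empty or contained
   in the root set of a nonzero polynomial, so null_sections applies. *)
Lemma negligible_new_variable (m : nat) (q : nat -> (I -> R) -> R) (k0 : 'I_m) :
  (forall k, polyfun s (q k)) ->
  P.-negligible [set w | q k0 (fun j => X j w) != 0 /\
                         \sum_(k < m) q k (fun j => X j w) * X i w ^+ k = 0].
Proof.
move=> Pq; pose f (x : I -> R) := \sum_(k < m) q k x * x i ^+ k.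
pose A := [set zw | q k0 (coords zw) != 0 /\ f (coords zw) = 0].
have mA : measurable A.
  rewrite [A](_ : _ = (fun zw => q k0 (coords zw)) @^-1` (~` [set 0]) `&`
                      (fun zw => f (coords zw)) @^-1` [set 0]); last first.
    by apply/seteqP; split => zw /= [q0 f0]; split => //; apply/eqP.
  apply: measurableI; apply: measurable_preimage.
  - apply: measurable_polyfun (Pq k0) _ => j js.
    by apply: measurable_coords; rewrite in_cons js orbT.
  - exact: measurableC (measurable_set1 0).
  - by apply: measurable_polyfun measurable_coords; exists m, q.
  - exact: measurable_set1.
have -> : [set w | q k0 (fun j => X j w) != 0 /\
                   \sum_(k < m) q k (fun j => X j w) * X i w ^+ k = 0] = pair_obs @^-1` A.
  by apply/seteqP; split => w; rewrite /preimage /A /mkset coords_pair_obs.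
apply/negligibleP; first exact: measurable_preimage.
apply: null_sections => // w.
have [q0|q0] := eqVneq (q k0 (fun j => X j w)) 0.
  rewrite (_ : ysection A w = set0) ?measure0 //; apply/seteqP; split => z //.
  by rewrite /ysection /= inE /A /= polyfun_coords //= q0 => -[]; rewrite eqxx.
pose Q := \poly_(k < m) q k (fun j => X j w).
have Q0 : Q != 0.
  apply: contra_neq q0 => Q0; have := congr1 (fun p : {poly R} => p`_k0) Q0.
  by rewrite coef_poly ltn_ord coef0.
have roots_null : (distribution P (X i)).-negligible [set z | Q.[z] = 0].
  by apply/negligibleP; [exact: measurable_root_set | exact: non_singular_root_set].
apply/negligibleP; first exact: measurable_ysection.
apply: negligibleS roots_null => z; rewrite /ysection /= inE /A /= => -[_ fz].
rewrite horner_poly -[RHS]fz /f {2}/coords eqxx /=.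
by apply: eq_bigr => k _; rewrite (polyfun_coords (z, w) (Pq k)).
Qed.

End IndependentCoordinate.

Section PolynomialOfIndependentVariables.
Variables (R : realType) (I : finType) (d : measure_display) (T : measurableType d)
  (P : probability T R) (X : I -> {RV P >-> R}).
Hypothesis indep : mutually_independent X.
Hypothesis ns : forall j, non_singular (X j).

Let measurable_zero_set s f : polyfun s f -> measurable [set w | f (fun j => X j w) = 0].
Proof.
move=> Pf; apply: measurable_preimage (measurable_set1 0).
by apply: measurable_polyfun Pf _ => j _; exact: measurable_funPT.
Qed.

(* Induction on the
   variables: expanding in the head variable X i, either a chosen nonzero
   coefficient vanishes (null by induction) or it does not and the polynomial
   in X i vanishes (null by negligible_new_variable). *)
Lemma polyfun_negligible s f : uniq s -> polyfun s f -> (exists x, f x != 0) ->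
  P [set w | f (fun j => X j w) = 0] = 0%E.
Proof.
elim: s f => [|i s IH] f /=.
  move=> _ [c Ec] [x fx]; rewrite (_ : [set w | _] = set0) ?measure0 //.
  by apply/seteqP; split => w //=; rewrite Ec => c0; move: fx; rewrite Ec c0 eqxx.
move=> /andP [i_notin_s uniq_s] [m [q [Pq Ef]]] [x fx].
have [k0 qk0] : exists k0 : 'I_m, q k0 x != 0.
  apply/existsP; apply: contraNT fx => /existsPn q0; rewrite Ef big1 // => k _.
  by have /negPn/eqP -> := q0 k; rewrite mul0r.
apply/negligibleP; first by apply: (measurable_zero_set (s := i :: s)); exists m, q.
apply: (@negligibleS _ _ _ _ ([set w | q k0 (fun j => X j w) = 0] `|`
  [set w | q k0 (fun j => X j w) != 0 /\
           \sum_(k < m) q k (fun j => X j w) * X i w ^+ k = 0])).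
  move=> w /= f0; have [q0|q0] := eqVneq (q k0 (fun j => X j w)) 0; first by left.
  by right; split => //; rewrite -Ef.
have new_null := negligible_new_variable indep i_notin_s (ns i) k0 Pq.
apply: negligibleU _ new_null; apply/negligibleP; first exact: measurable_zero_set (Pq k0).
by apply: IH => //; exists x.
Qed.

End PolynomialOfIndependentVariables.

Definition krylov (K : nzRingType) (N : nat) (A : 'M[K]_N) (C : 'cV[K]_N) : 'M[K]_N :=
  \matrix_(i < N, j < N) (iter j (mulmx A) C) i ord0.

Definition coef_mx (K : nzRingType) (N : nat) (p : 'I_N -> {poly K}) : 'M[K]_N :=
  \matrix_(j < N, k < N) (p k)`_j.

Lemma krylov_map (K L : nzRingType) (f : {rmorphism K -> L}) (N : nat)
  (A : 'M[K]_N) (C : 'cV[K]_N) :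
  krylov (map_mx f A) (map_mx f C) = map_mx f (krylov A C).
Proof.
have iter_map j : iter j (mulmx (map_mx f A)) (map_mx f C) = map_mx f (iter j (mulmx A) C).
  by elim: j => //= j ->; rewrite map_mxM.
by apply/matrixP => i j; rewrite !mxE iter_map mxE.
Qed.

Lemma poly_mx_vec_krylov (K : comNzRingType) (N : nat) (p : 'I_N -> {poly K})
  (A : 'M[K]_N) (C : 'cV[K]_N) : (forall k, (size (p k) <= N)%N) ->
  \matrix_(i < N, k < N) (poly_mx_vec (p k) A C) i ord0 = krylov A C *m coef_mx p.
Proof.
move=> size_p; apply/matrixP => i k; rewrite !mxE /poly_mx_vec summxE.
under eq_bigr do rewrite mxE.
rewrite (big_ord_widen N (fun j => (p k)`_j * (iter j (mulmx A) C) i ord0)) //.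
rewrite big_mkcond /=; apply: eq_bigr => j _; rewrite !mxE mulrC.
by case: ltnP => // sz; rewrite nth_default ?mulr0.
Qed.

(* Linearly independent polynomials of degree < N have an invertible
   coefficient matrix: a vector in the kernel of its transpose gives a
   vanishing linear combination. *)
Lemma det_coef_mx_neq0 (K : fieldType) (N : nat) (p : 'I_N -> {poly K}) :
  poly_lin_indep p -> (forall k, (size (p k) <= N)%N) -> \det (coef_mx p) != 0.
Proof.
move=> lin_p size_p; rewrite -det_tr; apply/det0P => -[v v0 Hv].
apply/negP: v0; rewrite negbK; apply/eqP/rowP => k; rewrite mxE.
apply: lin_p; apply/polyP => j; rewrite coef0 coef_sum.
rewrite (eq_bigr (fun l => v ord0 l * (p l)`_j)) => [|l _]; last by rewrite coefZ.
have [jN|jN] := ltnP j N.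
  have := congr1 (fun M : 'M[K]_(1, N) => M ord0 (Ordinal jN)) Hv; rewrite !mxE => vp0.
  by rewrite -[RHS]vp0; apply: eq_bigr => l _; rewrite !mxE.
by apply: big1 => l _; rewrite nth_default ?mulr0 // (leq_trans (size_p l)).
Qed.

Lemma det_poly_mx_vec_eq0 (K L : fieldType) (f : {rmorphism K -> L}) (N : nat)
  (p : 'I_N -> {poly L}) (A : 'M[K]_N) (C : 'cV[K]_N) :
  poly_lin_indep p -> (forall k, (size (p k) <= N)%N) ->
  (\det (\matrix_(i < N, k < N) (poly_mx_vec (p k) (map_mx f A) (map_mx f C)) i ord0) == 0)
  = (\det (krylov A C) == 0).
Proof.
move=> lin_p size_p.
rewrite poly_mx_vec_krylov // det_mulmx krylov_map det_map_mx mulf_eq0.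
by rewrite (negbTE (det_coef_mx_neq0 lin_p size_p)) orbF fmorph_eq0.
Qed.

Section KrylovDeterminant.
Variables (R : realType) (N : nat).

(* The N^2 + N real coordinates of a pair (A, C). *)
Local Notation V := ('I_N * 'I_N + 'I_N)%type.

Definition mx_of (x : V -> R) : 'M[R]_N := \matrix_(a, b) x (inl (a, b)).
Definition vec_of (x : V -> R) : 'cV[R]_N := \col_a x (inr a).
Definition krylov_det (x : V -> R) : R := \det (krylov (mx_of x) (vec_of x)).

Lemma polyfun_krylov_iter j (a : 'I_N) :
  polyfun (index_enum V) (fun x => (iter j (mulmx (mx_of x)) (vec_of x)) a ord0).
Proof.
have memV (k : V) : k \in index_enum V by exact: mem_index_enum.
elim: j a => [|j IH] a /=.
  by apply: (polyfun_ext (polyfun_var R (memV (inr a)))) => x; rewrite mxE.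
apply: (polyfun_ext (f := fun x => \sum_l mx_of x a l * (iter j (mulmx (mx_of x)) (vec_of x)) l ord0)).
  apply: polyfun_sum => l; apply: polyfun_mul (IH l).
  by apply: (polyfun_ext (polyfun_var R (memV (inl (a, l))))) => x; rewrite mxE.
by move=> x; rewrite mxE.
Qed.

Lemma polyfun_krylov_det : polyfun (index_enum V) krylov_det.
Proof.
apply: polyfun_sum => sigma; apply: polyfun_mul; first exact: polyfun_cst.
apply: polyfun_prod => a.
by apply: (polyfun_ext (polyfun_krylov_iter (sigma a) a)) => x; rewrite mxE.
Qed.

(* ... and it is not identically zero: for the shift matrix and the first
   basis vector, the Krylov matrix is the identity. *)
Definition shift_config (k : V) : R :=
  match k with
  | inl (a, b) => ((a : nat) == b.+1)%:R
  | inr a => ((a : nat) == 0%N)%:R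
  end.

(* The shift matrix moves the k-th basis vector to the (k+1)-th, so A^n C
   is the n-th basis vector. *)
Lemma krylov_shift_config n (a : 'I_N) :
  (iter n (mulmx (mx_of shift_config)) (vec_of shift_config)) a ord0 = ((a : nat) == n)%:R.
Proof.
elim: n a => [|n IH] a /=; first by rewrite mxE.
rewrite mxE; under eq_bigr do rewrite IH mxE.
have [an|an] := eqVneq (a : nat) n.+1.
  have nN : (n < N)%N by move: (ltn_ord a); rewrite an; exact: ltnW.
  rewrite (bigD1 (Ordinal nN)) //= an !eqxx mulr1 big1 ?addr0 // => l ln.
  have /negbTE -> : (l : nat) != n by apply: contraNneq ln => E; apply/eqP/val_inj.
  by rewrite mulr0.
rewrite big1 // => l _ /=; case: eqP => [al|_]; last by rewrite mul0r.
by case: eqP => [ln|_]; [move: an; rewrite al ln eqxx | rewrite mulr0].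
Qed.

Lemma krylov_det_neq0 : exists x, krylov_det x != 0.
Proof.
exists shift_config; rewrite /krylov_det.
suff -> : krylov (mx_of shift_config) (vec_of shift_config) = 1%:M by rewrite det1 oner_neq0.
by apply/matrixP => a b; rewrite !mxE krylov_shift_config.
Qed.

End KrylovDeterminant.

Theorem mainTheorem11 (d : measure_display) (T : measurableType d) (R : realType)
  (P : probability T R) (N : nat)
  (A : 'I_N * 'I_N -> {RV P >-> R}) (C : 'I_N -> {RV P >-> R})
  (p : 'I_N -> {poly R[i]}) :
  mutually_independent (fun k : ('I_N * 'I_N + 'I_N)%type =>
    match k with inl ij => A ij | inr i => C i end) ->
  (forall ij, non_singular (A ij)) ->
  (forall i, non_singular (C i)) ->
  poly_lin_indep p ->
  (forall k, (size (p k) <= N)%N) ->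
  P [set w | \det (\matrix_(i < N, k < N)
         (poly_mx_vec (p k)
            (\matrix_(a < N, b < N) ((A (a, b) w)%:C)%C)
            (\col_(a < N) ((C a w)%:C)%C)) i ord0) = 0] = 0%E.
Proof.
move=> indep nsA nsC lin_p size_p.
set X := (fun k => _) in indep.
have ns k : non_singular (X k) by case: k.
have matrix_A w : \matrix_(a < N, b < N) ((A (a, b) w)%:C)%C =
    map_mx (real_complex R) (mx_of (fun k => X k w)) by apply/matrixP => a b; rewrite !mxE.
have vector_C w : \col_(a < N) ((C a w)%:C)%C =
    map_mx (real_complex R) (vec_of (fun k => X k w)) by apply/matrixP => a b; rewrite !mxE.
rewrite (_ : [set w | _] = [set w | krylov_det (fun k => X k w) = 0]).
  apply: (polyfun_negligible indep ns (index_enum_uniq _) (polyfun_krylov_det R N)).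
  exact: krylov_det_neq0.
apply: eq_set => w; rewrite matrix_A vector_C; apply/propext.
have det_eq0 := det_poly_mx_vec_eq0 (real_complex R) (mx_of (fun k => X k w))
  (vec_of (fun k => X k w)) lin_p size_p.
by split => /eqP; [rewrite det_eq0 | rewrite -det_eq0] => /eqP.
Qed.
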